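(* Let $4\le k\le\infty$ and let $\Gamma$ be a graph whose maximal cliques (with respect to inclusion) pairwise intersect in at most a vertex. Let $V$ and $M$ be the sets of vertices and of maximal cliques of $\Gamma$, and let $\Gamma^*$ be the graph with vertex set $V\cup M$ in which: $v,v'\in V$ are adjacent iff they are adjacent in $\Gamma$; $m,m'\in M$ are adjacent iff $m\cap m'\neq\emptyset$; and $v\in V$, $m\in M$ are adjacent iff $v\in m$. Then the flag complex spanned on $\Gamma^*$ is $k$-large if and only if the flag complex spanned on $\Gamma$ is $k$-large.
   Context: The flag complex spanned on a graph has a simplex for each finite clique. A cycle is a subcomplex that is a subdivision of the circle; it is full if every simplex spanned by its vertices lies in it. A flag complex is $k$-large if it has no full cycle of length $<k$. *)

From Stdlib Require Import List Arith PeanoNat.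
Import ListNotations.

(* A simple graph is a symmetric irreflexive relation [adj] on a type [T]. *)

Definition clique {T : Type} (adj : T -> T -> Prop) (C : T -> Prop) : Prop :=
  forall x y, C x -> C y -> x <> y -> adj x y.

Definition max_clique {T : Type} (adj : T -> T -> Prop) (C : T -> Prop) : Prop :=
  clique adj C /\
  forall D : T -> Prop, clique adj D -> (forall x, C x -> D x) -> forall x, D x -> C x.

(* Simplices of the flag complex: finite cliques, given by a finite list of vertices. *)
Definition flag_simplex {T : Type} (adj : T -> T -> Prop) (s : list T) : Prop :=
  forall x y, In x s -> In y s -> x <> y -> adj x y.

(* A cycle of length n (n >= 3) in the flag complex: distinct vertices
   f 0, ..., f (n-1), with edges {f i, f (i+1 mod n)}; the subcomplex consists of
   these vertices and edges.  It is full if every simplex of the flag complex spanned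
   by its vertices belongs to it, i.e. is (empty or) a vertex or one of the edges. *)
Definition full_cycle {T : Type} (adj : T -> T -> Prop) (n : nat) (f : nat -> T) : Prop :=
  3 <= n /\
  (forall i j, i < n -> j < n -> f i = f j -> i = j) /\
  (forall i, i < n -> adj (f i) (f ((i + 1) mod n))) /\
  (forall s : list T, flag_simplex adj s ->
     (forall x, In x s -> exists i, i < n /\ x = f i) ->
     (forall x y, In x s -> In y s -> x = y) \/
     (exists i, i < n /\ forall x, In x s <-> (x = f i \/ x = f ((i + 1) mod n)))).

(* k ranges over nat extended with infinity: [None] = infinity. *)
Definition lt_inf (n : nat) (k : option nat) : Prop :=
  match k with Some k => n < k | None => True end.

Definition le_inf (m : nat) (k : option nat) : Prop :=
  match k with Some k => m <= k | None => True end.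

Definition k_large {T : Type} (adj : T -> T -> Prop) (k : option nat) : Prop :=
  forall n f, full_cycle adj n f -> ~ lt_inf n k.

Definition max_cliques_meet_in_at_most_a_vertex {T : Type} (adj : T -> T -> Prop) : Prop :=
  forall m m' : T -> Prop, max_clique adj m -> max_clique adj m' -> m <> m' ->
  forall x y, m x -> m' x -> m y -> m' y -> x = y.

Definition star_vertex {T : Type} (adj : T -> T -> Prop) : Type :=
  (T + { m : T -> Prop | max_clique adj m })%type.

Definition star_adj {T : Type} (adj : T -> T -> Prop) :
  star_vertex adj -> star_vertex adj -> Prop :=
  fun a b =>
    match a, b with
    | inl v, inl v' => adj v v'
    | inl v, inr m => proj1_sig m v
    | inr m, inl v => proj1_sig m v
    | inr m, inr m' => proj1_sig m <> proj1_sig m' /\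
                       exists x, proj1_sig m x /\ proj1_sig m' x
    end.

From Stdlib Require Import List Arith Lia Classical ClassicalEpsilon ProofIrrelevance.
From mathcomp Require classical_sets.
Import ListNotations.

(* For a symmetric irreflexive graph, a full cycle is exactly a hole: an induced cycle of
   length at least 4.  A hole of Gamma is a hole of Gamma^* through vertex nodes only.
   Conversely, a hole of Gamma^* is traded for a cycle with fewer clique nodes and no chord
   between nodes at distance two, which contains a hole no longer than itself (cut along a
   shortest chord); induction on the number of clique nodes ends at a hole of Gamma.
   If every node is a clique, consecutive cliques m_t, m_(t+1) are replaced by common vertices.
   Otherwise some vertex u is followed by a clique m1, which is followed by a clique m2 (u is
   not in m2); m1 is replaced by a vertex x of m1 ∩ m2, and m2 is dropped when the next node
   is a vertex.  The missing short chords come from one fact: since maximal cliques meet in at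
   most a vertex, a vertex adjacent to two vertices of a maximal clique A lies in A (by Zorn,
   the triangle they span extends to a maximal clique, which must be A). *)

Definition cyc_succ (n i j : nat) : Prop := (j = S i /\ j < n) \/ (j = 0 /\ S i = n).

Definition cyc_two (n i j : nat) : Prop := j = i + 2 \/ j + n = i + 2.

Ltac cyc_lia := unfold cyc_succ, cyc_two in *; lia.

Lemma cyc_succ_mod n i : i < n -> cyc_succ n i ((i + 1) mod n).
Proof.
  intros Hi. destruct (Nat.eq_dec (i + 1) n) as [E|E].
  - right. rewrite E, Nat.Div0.mod_same. lia.
  - left. rewrite Nat.mod_small; lia.
Qed.

Lemma mod_of_cyc_succ n i j : cyc_succ n i j -> (i + 1) mod n = j.
Proof.
  intros [[-> Hj]|[-> Hi]].
  - rewrite Nat.add_1_r. apply Nat.mod_small. lia.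
  - rewrite Nat.add_1_r, Hi. apply Nat.Div0.mod_same.
Qed.

Lemma add_mod_cases n r t : r < n -> t < n ->
  ((r + t) mod n = r + t /\ r + t < n) \/ ((r + t) mod n = r + t - n /\ n <= r + t).
Proof.
  intros Hr Ht. destruct (Nat.lt_ge_cases (r + t) n) as [L|L].
  - left. split; [apply Nat.mod_small|]; lia.
  - right. split; [|lia].
    replace (r + t) with (r + t - n + 1 * n) at 1 by lia.
    rewrite Nat.Div0.mod_add. apply Nat.mod_small. lia.
Qed.

Lemma cyc_succ_rotate n r i j : r < n -> i < n -> j < n ->
  cyc_succ n ((r + i) mod n) ((r + j) mod n) <-> cyc_succ n i j.
Proof.
  intros Hr Hi Hj.
  pose proof (add_mod_cases n r i Hr Hi). pose proof (add_mod_cases n r j Hr Hj). cyc_lia.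
Qed.

Lemma rotate_inj n r i j : r < n -> i < n -> j < n -> (r + i) mod n = (r + j) mod n -> i = j.
Proof.
  intros Hr Hi Hj.
  pose proof (add_mod_cases n r i Hr Hi). pose proof (add_mod_cases n r j Hr Hj). lia.
Qed.

Section Cycles.
Context {T : Type} (adj : T -> T -> Prop).

Definition cycle (n : nat) (f : nat -> T) : Prop :=
  3 <= n /\ (forall i j, i < n -> j < n -> f i = f j -> i = j) /\
  (forall i j, i < n -> cyc_succ n i j -> adj (f i) (f j)).

Definition hole (n : nat) (f : nat -> T) : Prop :=
  4 <= n /\ cycle n f /\
  (forall i j, i < n -> j < n -> adj (f i) (f j) -> cyc_succ n i j \/ cyc_succ n j i).

Definition two_chordless (n : nat) (f : nat -> T) : Prop :=
  forall i j, i < n -> j < n -> cyc_two n i j -> ~ adj (f i) (f j).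

Lemma hole_two_chordless n f : hole n f -> two_chordless n f.
Proof.
  intros (H4 & _ & Hch) i j Hi Hj Htwo Hij. destruct (Hch i j Hi Hj Hij); cyc_lia.
Qed.

Lemma hole_rotate n f r : r < n -> hole n f -> hole n (fun t => f ((r + t) mod n)).
Proof.
  intros Hr (H4 & (H3 & Hinj & Hsucc) & Hch).
  assert (Hlt : forall t, (r + t) mod n < n) by (intros; apply Nat.mod_upper_bound; lia).
  split; [exact H4|split; [split; [exact H3|split]|]].
  - intros i j Hi Hj E. apply (rotate_inj n r); auto.
  - intros i j Hi Hs. assert (j < n) by cyc_lia.
    apply Hsucc; [auto|]. apply cyc_succ_rotate; auto.
  - intros i j Hi Hj Hij.
    rewrite <- (cyc_succ_rotate n r i j), <- (cyc_succ_rotate n r j i) by auto.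
    apply Hch; auto.
Qed.

Section Symmetric.
Hypothesis hsym : forall x y, adj x y -> adj y x.
Hypothesis hirr : forall x, ~ adj x x.

Lemma flag_simplex_pair x y : adj x y -> flag_simplex adj [x; y].
Proof. intros Hxy a b [<-|[<-|[]]] [<-|[<-|[]]] Hab; auto; congruence. Qed.

Lemma full_cycle_simplex_on_edge n f : full_cycle adj n f ->
  forall s, flag_simplex adj s -> (forall x, In x s -> exists i, i < n /\ x = f i) ->
  (forall x y, In x s -> In y s -> x = y) \/
  exists i j, i < n /\ cyc_succ n i j /\ forall a, a < n -> In (f a) s -> a = i \/ a = j.
Proof.
  intros (H3 & Hinj & _ & Hsimp) s Hs Hin.
  destruct (Hsimp s Hs Hin) as [L|[i [Hi R]]]; [now left|right].
  exists i, ((i + 1) mod n). split; [auto|split; [apply cyc_succ_mod; auto|]].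
  intros a Ha Hfa. assert ((i + 1) mod n < n) by (apply Nat.mod_upper_bound; lia).
  destruct (proj1 (R (f a)) Hfa) as [E|E]; apply Hinj in E; auto.
Qed.

Lemma hole_of_full_cycle n f : full_cycle adj n f -> hole n f.
Proof.
  intros Hfull. pose proof (full_cycle_simplex_on_edge n f Hfull) as Hsimp'.
  destruct Hfull as (H3 & Hinj & Hadj & _).
  assert (Hcyc : cycle n f).
  { split; [exact H3|split; [exact Hinj|]].
    intros i j Hi Hs. rewrite <- (mod_of_cyc_succ _ _ _ Hs). auto. }
  split; [|split; [exact Hcyc|]].
  - destruct (Nat.eq_dec n 3) as [->|]; [exfalso|lia].
    assert (Hs : flag_simplex adj [f 0; f 1; f 2]).
    { destruct Hcyc as (_ & _ & Hs).
      assert (A01 : adj (f 0) (f 1)) by (apply Hs; cyc_lia).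
      assert (A12 : adj (f 1) (f 2)) by (apply Hs; cyc_lia).
      assert (A20 : adj (f 2) (f 0)) by (apply Hs; cyc_lia).
      intros x y [<-|[<-|[<-|[]]]] [<-|[<-|[<-|[]]]] Hxy; auto; tauto. }
    destruct (Hsimp' _ Hs) as [L|(i & j & Hi & Hij & R)].
    + intros x [<-|[<-|[<-|[]]]]; [exists 0|exists 1|exists 2]; split; auto; lia.
    + assert (E : f 0 = f 1) by (apply L; simpl; auto). apply Hinj in E; lia.
    + destruct (R 0), (R 1), (R 2); simpl; auto; cyc_lia.
  - intros a b Ha Hb Hab.
    destruct (Hsimp' [f a; f b]) as [L|(i & j & Hi & Hij & R)].
    + now apply flag_simplex_pair.
    + intros x [<-|[<-|[]]]; eauto.
    + exfalso. apply (hirr (f a)). rewrite (L (f a) (f b)) at 2 by (simpl; auto). exact Hab.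
    + assert (a <> b) by (intros ->; exact (hirr _ Hab)).
      destruct (R a), (R b); simpl; auto; subst; tauto.
Qed.

Lemma full_cycle_of_hole n f : hole n f -> full_cycle adj n f.
Proof.
  intros (H4 & (H3 & Hinj & Hsucc) & Hch).
  split; [exact H3|split; [exact Hinj|split]].
  - intros i Hi. apply Hsucc; [auto|]. apply cyc_succ_mod; auto.
  - intros s Hs Hin.
    destruct (classic (forall x y, In x s -> In y s -> x = y)) as [L|L]; [now left|right].
    apply not_all_ex_not in L as [x L]. apply not_all_ex_not in L as [y L].
    apply imply_to_and in L as [Hx L]. apply imply_to_and in L as [Hy Hxy].
    destruct (Hin x Hx) as [a [Ha ->]]. destruct (Hin y Hy) as [b [Hb ->]].
    (* a vertex of a hole adjacent to both ends of an edge would close a triangle *)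
    assert (Hedge : forall a b, a < n -> In (f a) s -> In (f b) s -> cyc_succ n a b ->
              exists i, i < n /\ forall z, In z s <-> z = f i \/ z = f ((i + 1) mod n)).
    { clear a b Ha Hb Hx Hy Hxy. intros a b Ha Hfa Hfb Hab. exists a. split; [auto|].
      rewrite (mod_of_cyc_succ _ _ _ Hab). intros z. split; [|intros [->| ->]; auto].
      intros Hz. destruct (Hin z Hz) as [c [Hc ->]].
      destruct (Nat.eq_dec c a) as [->|Nca]; [now left|].
      destruct (Nat.eq_dec c b) as [->|Ncb]; [now right|exfalso].
      assert (Hb : b < n) by cyc_lia.
      assert (Hca := Hch c a Hc Ha (Hs _ _ Hz Hfa (fun E => Nca (Hinj _ _ Hc Ha E)))).
      assert (Hcb := Hch c b Hc Hb (Hs _ _ Hz Hfb (fun E => Ncb (Hinj _ _ Hc Hb E)))).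
      cyc_lia. }
    assert (Hxy' : f a <> f b) by exact Hxy.
    destruct (Hch a b Ha Hb (Hs _ _ Hx Hy Hxy')); eauto.
Qed.

Lemma full_cycle_iff_hole n f : full_cycle adj n f <-> hole n f.
Proof. split; [apply hole_of_full_cycle|apply full_cycle_of_hole]. Qed.

Lemma segment_hole n f a d : cycle n f -> 3 <= d -> a + d < n -> adj (f a) (f (a + d)) ->
  (forall e b, 2 <= e -> e < d -> b + e < n -> ~ adj (f b) (f (b + e))) ->
  hole (S d) (fun t => f (a + t)).
Proof.
  intros (H3 & Hinj & Hsucc) Hd Had Hfar Hnear.
  assert (Hord : forall i j, i < j -> j <= d -> adj (f (a + i)) (f (a + j)) ->
            cyc_succ (S d) i j \/ cyc_succ (S d) j i).
  { intros i j Hij Hj Hadj.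
    destruct (Nat.eq_dec j (S i)) as [->|Nji]; [left; cyc_lia|].
    destruct (classic (i = 0 /\ j = d)) as [[-> ->]|Nend]; [right; cyc_lia|].
    exfalso. apply (Hnear (j - i) (a + i)); [lia|lia|lia|].
    replace (a + i + (j - i)) with (a + j) by lia. exact Hadj. }
  split; [lia|split; [split; [lia|split]|]].
  - intros i j Hi Hj E. apply Hinj in E; lia.
  - intros i j Hi [[-> Hj]|[-> HSi]].
    + apply Hsucc; cyc_lia.
    + apply hsym. replace (a + i) with (a + d) by lia. rewrite Nat.add_0_r. exact Hfar.
  - intros i j Hi Hj Hadj. destruct (lt_eq_lt_dec i j) as [[Lt| ->]|Gt].
    + apply Hord; auto; lia.
    + exfalso. exact (hirr _ Hadj).
    + apply or_comm, Hord; auto; lia.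
Qed.

Lemma cycle_has_hole n f : cycle n f -> two_chordless n f ->
  exists n' i, i + n' <= n /\ hole n' (fun t => f (i + t)).
Proof.
  intros Hc Htwo. pose proof Hc as (H3 & _ & Hsucc).
  set (P := fun d => 2 <= d /\ exists a, a + d < n /\ adj (f a) (f (a + d))).
  assert (HP : P (n - 1)).
  { split; [lia|]. exists 0. split; [lia|]. apply hsym, Hsucc; cyc_lia. }
  destruct (dec_inh_nat_subset_has_unique_least_element P (fun d => classic (P d))
              (ex_intro P (n - 1) HP))
    as [d [[[Hd [a [Had Hadj]]] Hmin] _]].
  destruct (Nat.eq_dec d 2) as [->|Nd].
  - exfalso. apply (Htwo a (a + 2)); auto; cyc_lia.
  - exists (S d), a. split; [lia|]. apply (segment_hole n); auto; [lia|].
    intros e b He Hed Hbe Hb. assert (d <= e) by (apply Hmin; split; eauto). lia.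
Qed.

End Symmetric.
End Cycles.

Definition induce_same {T T'} (adj : T -> T -> Prop) (adj' : T' -> T' -> Prop)
  (n : nat) (f : nat -> T) (g : nat -> T') : Prop :=
  forall i j, i < n -> j < n -> (f i = f j <-> g i = g j) /\ (adj (f i) (f j) <-> adj' (g i) (g j)).

Section Transfer.
Context {T T'} (adj : T -> T -> Prop) (adj' : T' -> T' -> Prop).
Context (n : nat) (f : nat -> T) (g : nat -> T').
Hypothesis hsame : induce_same adj adj' n f g.

Lemma cycle_transfer : cycle adj n f -> cycle adj' n g.
Proof.
  intros (H3 & Hinj & Hsucc). split; [exact H3|split].
  - intros i j Hi Hj E. apply Hinj; auto. apply hsame; auto.
  - intros i j Hi Hs. apply hsame; auto; cyc_lia.
Qed.

Lemma two_chordless_transfer : two_chordless adj n f -> two_chordless adj' n g.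
Proof. intros Htwo i j Hi Hj Hij Hadj. apply (Htwo i j); auto. apply hsame; auto. Qed.

Lemma hole_transfer : hole adj n f -> hole adj' n g.
Proof.
  intros (H4 & Hc & Hch). split; [exact H4|split; [apply cycle_transfer, Hc|]].
  intros i j Hi Hj Hadj. apply Hch; auto. apply hsame; auto.
Qed.

End Transfer.

Lemma induce_same_sym {T T'} (adj : T -> T -> Prop) (adj' : T' -> T' -> Prop) n f g :
  induce_same adj adj' n f g -> induce_same adj' adj n g f.
Proof. intros H i j Hi Hj. split; symmetry; apply H; auto. Qed.

Fixpoint count_upto (h : nat -> bool) (n : nat) : nat :=
  match n with 0 => 0 | S n => count_upto h n + (if h n then 1 else 0) end.

Lemma count_upto_ext h h' n : (forall t, t < n -> h t = h' t) -> count_upto h n = count_upto h' n.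
Proof. induction n; simpl; intros H; auto. rewrite IHn, H; auto. Qed.

Lemma count_upto_add h a b :
  count_upto h (a + b) = count_upto h a + count_upto (fun t => h (a + t)) b.
Proof.
  induction b; simpl; [rewrite Nat.add_0_r; lia|].
  rewrite Nat.add_succ_r; simpl. rewrite IHb. lia.
Qed.

Lemma count_upto_pos h n t : t < n -> h t = true -> 0 < count_upto h n.
Proof.
  induction n; intros Ht Hh; simpl; [lia|].
  destruct (Nat.eq_dec t n) as [->|]; [rewrite Hh; lia|]. specialize (IHn ltac:(lia) Hh). lia.
Qed.

Lemma count_upto_false n : count_upto (fun _ => false) n = 0.
Proof. induction n; simpl; lia. Qed.

Lemma count_upto_segment h i n' n : i + n' <= n ->
  count_upto (fun t => h (i + t)) n' <= count_upto h n.
Proof. intros H. replace n with (i + n' + (n - i - n')) by lia. rewrite !count_upto_add. lia. Qed.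

Lemma count_upto_rotate h n r : r < n -> count_upto (fun t => h ((r + t) mod n)) n = count_upto h n.
Proof.
  intros Hr.
  transitivity (count_upto (fun t => h ((r + t) mod n)) ((n - r) + r)); [f_equal; lia|].
  symmetry. transitivity (count_upto h (r + (n - r))); [f_equal; lia|].
  rewrite !count_upto_add, Nat.add_comm. f_equal; apply count_upto_ext; intros t Ht; f_equal.
  - symmetry. apply Nat.mod_small. lia.
  - replace (r + (n - r + t)) with (t + 1 * n) by lia.
    rewrite Nat.Div0.mod_add. symmetry. apply Nat.mod_small. lia.
Qed.

Lemma count_upto_update_lt h h' n p : p < n -> h p = true -> h' p = false ->
  (forall t, t < n -> t <> p -> h t = h' t) -> count_upto h' n < count_upto h n.
Proof.
  induction n; intros Hp E1 E2 Ho; [lia|]. simpl.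
  destruct (Nat.eq_dec p n) as [->|Ne].
  - rewrite E1, E2, (count_upto_ext h' h n); [lia|]. intros t Ht; symmetry; apply Ho; lia.
  - rewrite Ho by lia. specialize (IHn ltac:(lia) E1 E2 ltac:(intros; apply Ho; lia)). lia.
Qed.

Lemma cyc_transition (h : nat -> bool) n a b : a < n -> b < n -> h a = false -> h b = true ->
  exists i, i < n /\ h i = false /\ h ((i + 1) mod n) = true.
Proof.
  intros Ha Hb Fa Tb. apply NNPP. intros Hno.
  assert (Hstep : forall i, i < n -> h i = false -> h ((i + 1) mod n) = false).
  { intros i Hi Fi. apply Bool.not_true_is_false. intros Ti. apply Hno. eauto. }
  assert (Hall : forall t, h ((a + t) mod n) = false).
  { induction t as [|t IH].
    - rewrite Nat.add_0_r, Nat.mod_small; auto.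
    - rewrite <- Nat.add_1_r, Nat.add_assoc, <- Nat.Div0.add_mod_idemp_l.
      apply Hstep; [apply Nat.mod_upper_bound; lia|exact IH]. }
  specialize (Hall (n - a + b)). replace (a + (n - a + b)) with (b + 1 * n) in Hall by lia.
  rewrite Nat.Div0.mod_add, Nat.mod_small in Hall by auto. congruence.
Qed.

Section MaximalCliques.
Context {V : Type} (adj : V -> V -> Prop).

Lemma clique_in_max_clique (C : V -> Prop) : clique adj C ->
  exists M, max_clique adj M /\ forall x, C x -> M x.
Proof.
  intros HC.
  (* asking [X ∪ C] rather than [X ⊇ C] to be a clique makes the empty chain admissible *)
  set (P := fun X : V -> Prop => clique adj (fun z => X z \/ C z)).
  destruct (@classical_sets.Zorn_bigcup V P) as [A [HA Amax]].
  - intros F HFP Htot x y [[X FX Xx]|Cx] [[Y FY Yy]|Cy] Hxy.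
    + destruct (Htot X Y FX FY) as [XY|YX].
      * apply (HFP Y FY); auto.
      * apply (HFP X FX); auto.
    + apply (HFP X FX); auto.
    + apply (HFP Y FY); auto.
    + apply HC; auto.
  - assert (Hmax : forall B, P B -> (forall x, A x -> B x) -> forall x, B x -> A x).
    { intros B PB AB x Bx. apply NNPP. intros NAx.
      apply (Amax B); [split; [exact AB|intros BA; exact (NAx (BA x Bx))]|exact PB]. }
    assert (CA : forall x, C x -> A x).
    { intros x Cx. apply (Hmax (fun z => A z \/ C z)); auto.
      intros a b [[Aa|Ca]|Ca] [[Ab|Cb]|Cb]; apply HA; auto. }
    exists A. split; [split|exact CA].
    + intros a b Aa Ab. apply HA; auto.
    + intros D HD AD. apply Hmax; auto.
      intros a b [Da|Ca] [Db|Cb]; apply HD; auto.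
Qed.

Hypothesis hsym : forall x y, adj x y -> adj y x.
Hypothesis hmeet : max_cliques_meet_in_at_most_a_vertex adj.

Lemma max_clique_absorb (A : V -> Prop) a b c : max_clique adj A -> A a -> A b -> a <> b ->
  adj c a -> adj c b -> A c.
Proof.
  intros HA Aa Ab Nab Hca Hcb.
  destruct (clique_in_max_clique (fun z => z = a \/ z = b \/ z = c)) as [M [HM CM]].
  - intros x y [->|[->| ->]] [->|[->| ->]] Hxy; auto; try congruence; apply HA; auto.
  - apply NNPP. intros NAc.
    assert (NMA : M <> A) by (intros ->; apply NAc, CM; auto).
    apply Nab, (hmeet M A HM HA NMA); auto.
Qed.

End MaximalCliques.

Section Star.
Context {V : Type} (adj : V -> V -> Prop).
Hypothesis hsym : forall x y, adj x y -> adj y x.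
Hypothesis hirr : forall x, ~ adj x x.
Hypothesis hmeet : max_cliques_meet_in_at_most_a_vertex adj.

Local Notation star := (star_adj adj).

Lemma star_adj_sym x y : star x y -> star y x.
Proof. destruct x, y; simpl; auto. intros [N [z [H1 H2]]]. split; eauto. Qed.

Lemma star_adj_irr x : ~ star x x.
Proof. destruct x; simpl; auto. intros [N _]; auto. Qed.

Definition node_set (z : star_vertex adj) : V -> Prop :=
  match z with inl _ => fun _ => False | inr m => proj1_sig m end.

Lemma node_set_clique z : clique adj (node_set z).
Proof. destruct z as [v|m]; [intros x y []|exact (proj1 (proj2_sig m))]. Qed.

Lemma node_set_absorb z a b c : node_set z a -> node_set z b -> a <> b ->
  adj c a -> adj c b -> node_set z c.
Proof.
  destruct z as [v|m]; simpl; [tauto|].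
  apply max_clique_absorb; auto. exact (proj2_sig m).
Qed.

Lemma star_adj_node_sets z z' y : z <> z' -> node_set z y -> node_set z' y -> star z z'.
Proof.
  destruct z as [v|A], z' as [v'|B]; simpl; try tauto. intros N HA HB. split; [|eauto].
  intros E. apply N. destruct A as [A pA], B as [B pB]. simpl in E. subst B.
  rewrite (proof_irrelevance _ pA pB). reflexivity.
Qed.

Lemma star_adj_absorb (A : {m | max_clique adj m}) a b z :
  proj1_sig A a -> proj1_sig A b -> a <> b -> star z (inl a) -> star z (inl b) -> z <> inr A ->
  star z (inr A).
Proof.
  intros Aa Ab Nab Hza Hzb NzA. destruct z as [t|B].
  - simpl in *. apply (max_clique_absorb adj hsym hmeet _ a b); auto. exact (proj2_sig A).
  - apply (star_adj_node_sets _ _ a); auto.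
Qed.

Definition is_clique_node (z : star_vertex adj) : bool :=
  match z with inl _ => false | inr _ => true end.

Definition clique_count (n : nat) (f : nat -> star_vertex adj) : nat :=
  count_upto (fun t => is_clique_node (f t)) n.

Definition star_reduct (n : nat) (f : nat -> star_vertex adj) : Prop :=
  exists n' g, n' <= n /\ cycle star n' g /\ two_chordless star n' g /\
  clique_count n' g < clique_count n f.

Lemma induce_same_inl n (h : nat -> V) (f : nat -> star_vertex adj) :
  (forall t, t < n -> f t = inl (h t)) -> induce_same adj star n h f.
Proof.
  intros E i j Hi Hj. rewrite (E i Hi), (E j Hj). split; [split; congruence|reflexivity].
Qed.

Lemma hole_of_vertex_nodes n f : hole star n f ->
  (forall t, t < n -> is_clique_node (f t) = false) -> exists h, hole adj n h.
Proof.
  intros Hf Hv. assert (H0 : 0 < n) by (destruct Hf; lia).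
  destruct (f 0) as [v0|] eqn:E0; [|specialize (Hv 0 H0); rewrite E0 in Hv; discriminate].
  exists (fun t => match f t with inl v => v | inr _ => v0 end).
  apply (hole_transfer star adj n f); [|exact Hf].
  apply induce_same_sym, induce_same_inl. intros t Ht.
  specialize (Hv t Ht). destruct (f t); [reflexivity|discriminate].
Qed.

Section CliqueNodes.
Variables (n : nat) (f : nat -> star_vertex adj).
Hypothesis Hf : hole star n f.
Hypothesis Hm : forall t, t < n -> is_clique_node (f t) = true.

Lemma clique_nodes_meet p q y : p < n -> q < n -> node_set (f p) y -> node_set (f q) y ->
  p = q \/ cyc_succ n p q \/ cyc_succ n q p.
Proof.
  intros Hp Hq Hpy Hqy. pose proof Hf as (_ & (_ & Hinj & _) & Hch).
  destruct (Nat.eq_dec p q); [now left|right].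
  assert (f p <> f q) by (intros E; apply Hinj in E; auto).
  apply Hch; auto. apply (star_adj_node_sets _ _ y); auto.
Qed.

Lemma clique_nodes_common_vertices :
  exists x, forall t, t < n -> node_set (f t) (x t) /\ node_set (f ((t + 1) mod n)) (x t).
Proof.
  pose proof Hf as (_ & (H3 & _ & Hsucc) & _).
  assert (Hshare : forall t, t < n -> exists y, node_set (f t) y /\ node_set (f ((t + 1) mod n)) y).
  { intros t Ht. assert (Hs := Hsucc t _ Ht (cyc_succ_mod n t Ht)).
    assert (Hm1 := Hm t Ht).
    assert (Hm2 := Hm ((t + 1) mod n) (Nat.mod_upper_bound (t + 1) n ltac:(lia))).
    destruct (f t), (f ((t + 1) mod n)); simpl in *; try discriminate.
    destruct Hs as [_ [y Hy]]. eauto. }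
  destruct (Hshare 0 ltac:(lia)) as [y0 _].
  apply (choice (fun t y => t < n -> node_set (f t) y /\ node_set (f ((t + 1) mod n)) y)).
  intros t. destruct (Nat.lt_ge_cases t n) as [Ht|Ht].
  - destruct (Hshare t Ht) as [y Hy]. eauto.
  - exists y0. lia.
Qed.

Lemma vertex_cycle_of_clique_nodes : exists x, cycle adj n x /\ two_chordless adj n x.
Proof.
  pose proof Hf as (H4 & (H3 & _) & _).
  assert (Hsn : forall t, t < n -> cyc_succ n t ((t + 1) mod n))
    by (intros; apply cyc_succ_mod; auto).
  destruct clique_nodes_common_vertices as [x Hx].
  assert (Hxinj : forall a b, a < n -> b < n -> x a = x b -> a = b).
  { intros a b Ha Hb E. destruct (Hx a Ha) as [Xa Xa']. destruct (Hx b Hb) as [Xb Xb'].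
    rewrite E in Xa, Xa'. pose proof (Hsn a Ha). pose proof (Hsn b Hb).
    destruct (clique_nodes_meet a b (x b)), (clique_nodes_meet a ((b + 1) mod n) (x b)),
      (clique_nodes_meet ((a + 1) mod n) b (x b)); auto; cyc_lia. }
  assert (Hxsucc : forall a b, a < n -> cyc_succ n a b -> adj (x a) (x b)).
  { intros a b Ha Hab. assert (Hb : b < n) by cyc_lia.
    apply (node_set_clique (f b)).
    - rewrite <- (mod_of_cyc_succ _ _ _ Hab). apply Hx; auto.
    - apply Hx; auto.
    - intros E. apply Hxinj in E; auto. cyc_lia. }
  exists x. split; [split; [exact H3|split; [exact Hxinj|exact Hxsucc]]|].
  intros a c Ha Hc Hac Hadj.
  set (b := (a + 1) mod n). set (d := (c + 1) mod n).
  assert (Hab := Hsn a Ha). assert (Hcd := Hsn c Hc). fold b d in Hab, Hcd.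
  assert (Hb : b < n) by cyc_lia. assert (Hbc : cyc_succ n b c) by cyc_lia.
  (* [x c] is adjacent to the two distinct vertices [x a], [x b] of the clique [f b] *)
  assert (Xc : node_set (f b) (x c)).
  { apply (node_set_absorb _ (x a) (x b)).
    - apply Hx; auto.
    - apply Hx; auto.
    - intros E. apply Hxinj in E; auto. cyc_lia.
    - apply hsym; exact Hadj.
    - apply hsym, Hxsucc; auto. }
  assert (Xc' : node_set (f d) (x c)) by (apply Hx; auto).
  destruct (clique_nodes_meet b d (x c)); auto; cyc_lia.
Qed.

Lemma reduce_clique_nodes : star_reduct n f.
Proof.
  destruct vertex_cycle_of_clique_nodes as [x [Hc Htwo]].
  assert (Hsame : induce_same adj star n x (fun t => inl (x t))) by (apply induce_same_inl; auto).
  exists n, (fun t => inl (x t)). split; [lia|split; [|split]].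
  - exact (cycle_transfer _ _ _ _ _ Hsame Hc).
  - exact (two_chordless_transfer _ _ _ _ _ Hsame Htwo).
  - unfold clique_count. simpl. rewrite count_upto_false.
    apply (count_upto_pos _ n 0); [destruct Hf; lia|apply Hm; destruct Hf; lia].
Qed.

End CliqueNodes.


Section MixedRun.
Variables (n : nat) (f : nat -> star_vertex adj) (u x : V) (m1 m2 : {m | max_clique adj m}).
Hypothesis Hf : hole star n f.
Hypothesis Hf0 : f 0 = inl u.
Hypothesis Hf1 : f 1 = inr m1.
Hypothesis Hf2 : f 2 = inr m2.
Hypothesis Hxm1 : proj1_sig m1 x.
Hypothesis Hxm2 : proj1_sig m2 x.

Lemma run_u_in_m1 : proj1_sig m1 u.
Proof.
  pose proof Hf as (H4 & (_ & _ & Hsucc) & _).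
  assert (H01 : star (f 0) (f 1)) by (apply Hsucc; cyc_lia). rewrite Hf0, Hf1 in H01. exact H01.
Qed.

Lemma run_adj_u_x : adj u x.
Proof.
  pose proof Hf as (H4 & _).
  assert (Hum2 : ~ star (f 0) (f 2)) by (apply (hole_two_chordless _ _ _ Hf); cyc_lia).
  rewrite Hf0, Hf2 in Hum2.
  apply (node_set_clique (inr m1)); [exact run_u_in_m1|exact Hxm1|]. intros ->. exact (Hum2 Hxm2).
Qed.

Lemma run_u_ne_x : u <> x.
Proof. intros E. pose proof run_adj_u_x as A. rewrite E in A. exact (hirr _ A). Qed.

Lemma run_x_fresh b : b < n -> f b <> inl x.
Proof.
  intros Hb E. pose proof Hf as (H4 & _ & Hch).
  assert (Hb1 : star (f b) (f 1)) by (rewrite E, Hf1; exact Hxm1).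
  assert (Hb2 : star (f b) (f 2)) by (rewrite E, Hf2; exact Hxm2).
  apply Hch in Hb1; [|lia|lia]. apply Hch in Hb2; [|lia|lia]. cyc_lia.
Qed.

Lemma run_last_not_adj_x : ~ star (f (n - 1)) (inl x).
Proof.
  intros Hlast. pose proof Hf as (H4 & (_ & Hinj & Hsucc) & _).
  apply (hole_two_chordless _ _ _ Hf (n - 1) 1); [lia|lia|cyc_lia|]. rewrite Hf1.
  apply (star_adj_absorb m1 u x); auto.
  - exact run_u_in_m1.
  - exact run_u_ne_x.
  - rewrite <- Hf0. apply Hsucc; cyc_lia.
  - rewrite <- Hf1. intros E. apply Hinj in E; lia.
Qed.

Lemma run_reduce_long m3 : f 3 = inr m3 -> star_reduct n f.
Proof.
  intros Hf3. pose proof Hf as (H4 & (_ & Hinj & Hsucc) & _).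
  pose proof (hole_two_chordless _ _ _ Hf) as Htwo.
  assert (Hxm3 : ~ proj1_sig m3 x).
  { intros Hx3. apply (Htwo 1 3); [lia|lia|cyc_lia|]. apply (star_adj_node_sets _ _ x).
    - intros E. apply Hinj in E; lia.
    - rewrite Hf1. exact Hxm1.
    - rewrite Hf3. exact Hx3. }
  set (g := fun t => match t with 1 => inl x | _ => f t end).
  assert (Hg : forall t, t <> 1 -> g t = f t) by (intros [|[|t]] Nt; auto; lia).
  exists n, g. split; [lia|split; [split; [lia|split]|split]].
  - intros i j Hi Hj E.
    destruct (Nat.eq_dec i 1) as [->|Ni], (Nat.eq_dec j 1) as [->|Nj]; auto.
    + rewrite (Hg j Nj) in E. exfalso. exact (run_x_fresh j Hj (eq_sym E)).
    + rewrite (Hg i Ni) in E. exfalso. exact (run_x_fresh i Hi E).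
    + rewrite (Hg i Ni), (Hg j Nj) in E. apply Hinj; auto.
  - intros i j Hi Hs. destruct (Nat.eq_dec i 1) as [->|Ni].
    + replace j with 2 by cyc_lia. simpl. rewrite Hf2. exact Hxm2.
    + destruct (Nat.eq_dec j 1) as [->|Nj].
      * replace i with 0 by cyc_lia. simpl. rewrite Hf0. exact run_adj_u_x.
      * rewrite !Hg by auto. apply Hsucc; auto.
  - intros i j Hi Hj Hij. destruct (Nat.eq_dec i 1) as [->|Ni].
    + replace j with 3 by cyc_lia. simpl. rewrite Hf3. exact Hxm3.
    + destruct (Nat.eq_dec j 1) as [->|Nj].
      * replace i with (n - 1) by cyc_lia. rewrite Hg by lia. exact run_last_not_adj_x.
      * rewrite !Hg by auto. apply Htwo; auto.
  - apply (count_upto_update_lt _ _ n 1); [lia|simpl; rewrite Hf1; reflexivity|reflexivity|].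
    intros t Ht Nt. rewrite Hg; auto.
Qed.

Section ShortRun.
Variable w : V.
Hypothesis Hf3 : f 3 = inl w.

Lemma run_w_in_m2 : proj1_sig m2 w.
Proof.
  pose proof Hf as (H4 & (_ & _ & Hsucc) & _).
  assert (H23 : star (f 2) (f 3)) by (apply Hsucc; cyc_lia). rewrite Hf2, Hf3 in H23. exact H23.
Qed.

Lemma run_adj_x_w : adj x w.
Proof.
  apply (node_set_clique (inr m2)); [exact Hxm2|exact run_w_in_m2|].
  intros E. apply (run_x_fresh 3); [destruct Hf; lia|]. rewrite Hf3, E. reflexivity.
Qed.

Lemma run_not_adj_w_u : ~ adj w u.
Proof.
  (* otherwise [w] is adjacent to the distinct vertices [u], [x] of [m1] *)
  intros Awu. pose proof Hf as (H4 & _).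
  apply (hole_two_chordless _ _ _ Hf 1 3); [lia|lia|cyc_lia|]. rewrite Hf1, Hf3.
  apply star_adj_sym, (star_adj_absorb m1 u x); simpl; auto.
  - exact run_u_in_m1.
  - exact run_u_ne_x.
  - apply hsym, run_adj_x_w.
  - discriminate.
Qed.

Lemma run_short_ge5 : 5 <= n.
Proof.
  pose proof Hf as (H4 & (_ & _ & Hsucc) & _).
  destruct (Nat.eq_dec n 4) as [E|]; [|lia]. exfalso. apply run_not_adj_w_u.
  assert (H30 : star (f 3) (f 0)) by (apply Hsucc; cyc_lia). rewrite Hf3, Hf0 in H30. exact H30.
Qed.

Lemma run_not_adj_4_x : ~ star (f 4) (inl x).
Proof.
  intros H4x. pose proof Hf as (H4 & (_ & Hinj & Hsucc) & _). pose proof run_short_ge5.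
  apply (hole_two_chordless _ _ _ Hf 2 4); [lia|lia|cyc_lia|]. rewrite Hf2.
  apply star_adj_sym, (star_adj_absorb m2 w x); auto.
  - exact run_w_in_m2.
  - intros E. apply hirr with x. rewrite <- E at 2. exact run_adj_x_w.
  - apply star_adj_sym. rewrite <- Hf3. apply Hsucc; cyc_lia.
  - rewrite <- Hf2. intros E. apply Hinj in E; lia.
Qed.

Lemma run_reduce_short : star_reduct n f.
Proof.
  pose proof Hf as (_ & (_ & Hinj & Hsucc) & _). pose proof run_short_ge5 as H5.
  pose proof (hole_two_chordless _ _ _ Hf) as Htwo.
  set (g := fun t => match t with 0 => inl u | 1 => inl x | _ => f (S t) end).
  assert (Hg : forall t, g (S (S t)) = f (S (S (S t)))) by reflexivity.
  exists (n - 1), g. split; [lia|split; [split; [lia|split]|split]].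
  - intros i j Hi Hj E. destruct i as [|[|i]], j as [|[|j]]; simpl in E; auto.
    + exfalso. injection E. exact run_u_ne_x.
    + rewrite <- Hf0 in E. apply Hinj in E; lia.
    + exfalso. injection E. exact (not_eq_sym run_u_ne_x).
    + exfalso. exact (run_x_fresh (S (S (S j))) ltac:(lia) (eq_sym E)).
    + rewrite <- Hf0 in E. apply Hinj in E; lia.
    + exfalso. exact (run_x_fresh (S (S (S i))) ltac:(lia) E).
    + apply Hinj in E; lia.
  - intros i j Hi Hs. destruct i as [|[|i]].
    + replace j with 1 by cyc_lia. exact run_adj_u_x.
    + replace j with 2 by cyc_lia. rewrite Hg, Hf3. exact run_adj_x_w.
    + destruct Hs as [[-> Hj]|[-> Hn]].
      * apply Hsucc; cyc_lia.
      * change (g 0) with (inl u : star_vertex adj). rewrite <- Hf0. apply Hsucc; cyc_lia.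
  - intros i j Hi Hj Hij. destruct i as [|[|i]], j as [|[|j]]; rewrite ?Hg; try (exfalso; cyc_lia).
    + replace j with 0 by cyc_lia. rewrite Hf3. intros Auw. exact (run_not_adj_w_u (hsym _ _ Auw)).
    + replace j with 1 by cyc_lia. intros Hx4. exact (run_not_adj_4_x (star_adj_sym _ _ Hx4)).
    + change (g 0) with (inl u : star_vertex adj). rewrite <- Hf0. apply Htwo; cyc_lia.
    + replace (S (S (S i))) with (n - 1) by cyc_lia. exact run_last_not_adj_x.
    + apply Htwo; cyc_lia.
  - unfold clique_count.
    replace (n - 1) with (2 + (n - 3)) by lia. replace n with (3 + (n - 3)) at 2 by lia.
    rewrite !count_upto_add. simpl. rewrite Hf0, Hf1, Hf2. simpl. lia.
Qed.

End ShortRun.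
End MixedRun.

Lemma hole_reduce_mixed n f u m1 : hole star n f -> f 0 = inl u -> f 1 = inr m1 -> star_reduct n f.
Proof.
  intros Hf Hf0 Hf1. pose proof Hf as (H4 & (_ & Hinj & Hsucc) & _).
  assert (H12 : star (f 1) (f 2)) by (apply Hsucc; cyc_lia).
  destruct (f 2) as [w|m2] eqn:Hf2.
  - (* [u] and [w] would both lie in [m1] *)
    exfalso. apply (hole_two_chordless _ _ _ Hf 0 2); [lia|lia|cyc_lia|].
    rewrite Hf0, Hf2. apply (node_set_clique (inr m1)).
    + apply (run_u_in_m1 n f u m1 Hf Hf0 Hf1).
    + rewrite Hf1 in H12. exact H12.
    + intros ->. rewrite <- Hf2 in Hf0. apply Hinj in Hf0; lia.
  - rewrite Hf1 in H12. destruct H12 as [_ [x [Hxm1 Hxm2]]].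
    destruct (f 3) as [w|m3] eqn:Hf3.
    + exact (run_reduce_short n f u x m1 m2 Hf Hf0 Hf1 Hf2 Hxm1 Hxm2 w Hf3).
    + exact (run_reduce_long n f u x m1 m2 Hf Hf0 Hf1 Hf2 Hxm1 Hxm2 m3 Hf3).
Qed.

Lemma hole_reduce n f : hole star n f -> (exists t, t < n /\ is_clique_node (f t) = true) ->
  star_reduct n f.
Proof.
  intros Hf [b [Hb Tb]].
  destruct (classic (forall t, t < n -> is_clique_node (f t) = true)) as [All|NAll].
  { exact (reduce_clique_nodes n f Hf All). }
  apply not_all_ex_not in NAll as [a NA]. apply imply_to_and in NA as [Ha NA].
  apply Bool.not_true_is_false in NA.
  destruct (cyc_transition (fun t => is_clique_node (f t)) n a b Ha Hb NA Tb) as [i (Hi & Fi & Ti)].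
  set (g := fun t => f ((i + t) mod n)).
  assert (Hg : hole star n g) by exact (hole_rotate star n f i Hi Hf).
  assert (Hg0 : g 0 = f i) by (unfold g; rewrite Nat.add_0_r, Nat.mod_small; auto).
  destruct (f i) as [u|] eqn:Hfi; [|discriminate].
  destruct (g 1) as [|m1] eqn:Hg1; [unfold g in Hg1; rewrite Hg1 in Ti; discriminate|].
  destruct (hole_reduce_mixed n g u m1 Hg Hg0 Hg1) as (n' & h & Hle & Hc & Htwo & Hlt).
  exists n', h. split; [exact Hle|split; [exact Hc|split; [exact Htwo|]]].
  unfold clique_count in *. rewrite <- (count_upto_rotate _ n i Hi). exact Hlt.
Qed.

Lemma star_hole_descends n f : hole star n f -> exists n' h, n' <= n /\ hole adj n' h.
Proof.
  remember (clique_count n f) as c eqn:Hc. revert n f Hc.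
  induction c as [c IH] using lt_wf_ind. intros n f Hc Hf.
  destruct (classic (exists t, t < n /\ is_clique_node (f t) = true)) as [Hex|Hno].
  - destruct (hole_reduce n f Hf Hex) as (n' & g & Hle & Hcyc & Htwo & Hlt).
    destruct (cycle_has_hole star star_adj_sym star_adj_irr n' g Hcyc Htwo)
      as (n'' & i & Hseg & Hh).
    assert (Hcount := count_upto_segment (fun t => is_clique_node (g t)) i n'' n' Hseg).
    destruct (IH (clique_count n'' (fun t => g (i + t)))) with n'' (fun t => g (i + t))
      as (n3 & h & Hle3 & Hh3); [unfold clique_count in *; lia|reflexivity|exact Hh|].
    exists n3, h. split; [lia|exact Hh3].
  - destruct (hole_of_vertex_nodes n f Hf) as [h Hh].
    + intros t Ht. apply Bool.not_true_is_false. intros T. apply Hno. eauto.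
    + exists n, h. auto.
Qed.

End Star.

Theorem lemma2p7 (V : Type) (adj : V -> V -> Prop) (k : option nat)
  (hk : le_inf 4 k)
  (hsym : forall x y, adj x y -> adj y x)
  (hirr : forall x, ~ adj x x)
  (hmeet : max_cliques_meet_in_at_most_a_vertex adj) :
  k_large (star_adj adj) k <-> k_large adj k.
Proof.
  assert (Hstar : forall n f, full_cycle (star_adj adj) n f <-> hole (star_adj adj) n f)
    by (intros; apply full_cycle_iff_hole; [apply star_adj_sym|apply star_adj_irr]; auto).
  split.
  - intros Hlarge n f Hf. apply (Hlarge n (fun t => inl (f t))), Hstar.
    apply (hole_transfer adj (star_adj adj) n f); [apply induce_same_inl; auto|].
    apply full_cycle_iff_hole; auto.
  - intros Hlarge n f Hf Hlt.
    destruct (star_hole_descends adj hsym hirr hmeet n f (proj1 (Hstar n f) Hf))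
      as (n' & h & Hle & Hh).
    apply (Hlarge n' h); [apply full_cycle_iff_hole; auto|]. destruct k; simpl in *; lia.
Qed.
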